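(* Let $\alpha$ be a QCA on $\mathrm{Mat}(\mathbb{Z}^D,p)$ with spread $\ell>1$ (more generally, any $\ell>1$ that bounds its spread), and $n\in\mathbb{Z}$. Then the boundary algebra $\mathcal B(n,\ell)=\alpha(\mathrm{Mat}(H(n),p))\cap\mathrm{Mat}(S(n,\ell),p)$, regarded as a subalgebra of a local operator algebra on $\mathbb{Z}^{D-1}$, is an invertible subalgebra. If the QCA has spread at most $\ell$, then this invertible subalgebra has spread at most $2\ell$.
   Context: For $p:\mathbb{Z}^D\to\mathbb{Z}_{>0}$ and finite $F$, $\mathrm{Mat}(F,p)=\bigotimes_{s\in F}M_{p(s)}(\mathbb{C})$ with embeddings by tensoring identities; $\mathrm{Mat}(\mathbb{Z}^D,p)$ is the union, and for arbitrary $S$, $\mathrm{Mat}(S,p)$ is the union of $\mathrm{Mat}(F,p)$ over finite $F\subseteq S$. $\mathrm{Supp}(x)$ is the smallest finite set $F$ with $x\in\mathrm{Mat}(F,p)$; $S^{+\ell}$ is the set of sites at $\ell_\infty$-distance at most $\ell$ from $S$. A QCA is a $*$-automorphism $\alpha$ of $\mathrm{Mat}(\mathbb{Z}^D,p)$ with some $\ell>0$ (spread) such that $\mathrm{Supp}(\alpha(x))\subseteq\mathrm{Supp}(x)^{+\ell}$ for all $x$. Put $H(n)=(\mathbb{Z}\cap(-\infty,n])\times\mathbb{Z}^{D-1}$ and $S(n,\ell)=(\mathbb{Z}\cap[n-\ell+1,n+\ell])\times\mathbb{Z}^{D-1}$. The algebra $\mathrm{Mat}(S(n,\ell),p)$ is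 identified with the local operator algebra $\mathrm{Mat}(\mathbb{Z}^{D-1},p')$ where the site $y\in\mathbb{Z}^{D-1}$ combines the sites $\{n-\ell+1,\dots,n+\ell\}\times\{y\}$, i.e. $p'(y)=\prod_{j=n-\ell+1}^{n+\ell}p(j,y)$. A unital $*$-subalgebra $\mathcal A$ of $\mathrm{Mat}(\mathbb{Z}^{D-1},p')$ is invertible with spread $m$ if every $x\in\mathrm{Mat}(\mathbb{Z}^{D-1},p')$ is a finite sum $x=\sum_ia_ib_i$ with $a_i\in\mathcal A$, $b_i$ in the commutant of $\mathcal A$ within $\mathrm{Mat}(\mathbb{Z}^{D-1},p')$, and $\mathrm{Supp}(a_i),\mathrm{Supp}(b_i)\subseteq\mathrm{Supp}(x)^{+m}$. *)

From HB Require Import structures.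
From mathcomp Require Import all_boot all_order all_algebra.
From mathcomp Require Import boolp classical_sets cardinality fsbigop.
From mathcomp Require Import complex Rstruct.

Set Implicit Arguments.
Unset Strict Implicit.
Unset Printing Implicit Defensive.

Import Order.TTheory GRing.Theory Num.Theory.
Local Open Scope classical_set_scope.
Local Open Scope ring_scope.

Definition C : Type := complex Rdefinitions.R.

Definition site (D : nat) : Type := {ffun 'I_D -> int}.

Definition linf_dist (D : nat) (s t : site D) : nat :=
  (\max_(i : 'I_D) `|s i - t i|)%N.

Definition thicken (D : nat) (S : set (site D)) (l : nat) : set (site D) :=
  [set t | exists2 s, S s & (linf_dist s t <= l)%N].

(** Concrete model of the local operator algebra Mat(Z^D,p).
    A (product-basis) configuration assigns to every site s a basis index of
    C^{p(s)}.  An operator is represented by its matrix kernel on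
    configurations.  An element A of Mat(G,p) = (x)_{s in G} M_{p(s)}(C),
    G finite, embedded into larger algebras by tensoring with identities, is
    represented by the kernel of A (x) 1 :
       K sigma tau = A(sigma|_G, tau|_G) * [sigma = tau off G]
    on valid configurations and 0 elsewhere. *)
Definition conf (D : nat) : Type := site D -> nat.
Definition op (D : nat) : Type := conf D -> conf D -> C.

Section LocalAlgebra.
Variable D : nat.
Variable p : site D -> nat.

Definition valid (sg : conf D) : Prop := forall s, (sg s < p s)%N.

Definition agree_off (G : set (site D)) (sg tau : conf D) : Prop :=
  forall s, ~ G s -> sg s = tau s.

Definition agree_on (G : set (site D)) (sg tau : conf D) : Prop :=
  forall s, G s -> sg s = tau s.

(** K is of the form A (x) 1 with A acting on the sites of G. *)
Definition ampliation (G : set (site D)) (K : op D) : Prop :=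
  (forall sg tau, K sg tau != 0 ->
     [/\ valid sg, valid tau & agree_off G sg tau]) /\
  (forall sg tau sg' tau', valid sg -> valid tau -> valid sg' -> valid tau' ->
     agree_off G sg tau -> agree_off G sg' tau' ->
     agree_on G sg sg' -> agree_on G tau tau' -> K sg tau = K sg' tau').

Definition Mat (S : set (site D)) : set (op D) :=
  [set K | exists G, [/\ finite_set G, G `<=` S & ampliation G K]].

Definition opzero : op D := fun _ _ => 0.
Definition opone : op D :=
  fun sg tau => if `[< sg = tau /\ valid sg >] then 1 else 0.
Definition opadd (x y : op D) : op D := fun sg tau => x sg tau + y sg tau.
Definition opscale (c : C) (x : op D) : op D := fun sg tau => c * x sg tau.
(* matrix product; for local operators only finitely many terms are nonzero *)
Definition opmul (x y : op D) : op D :=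
  fun sg tau => \sum_(rho \in [set: conf D]) x sg rho * y rho tau.
Definition opadj (x : op D) : op D := fun sg tau => (x tau sg)^*.

Definition is_Supp (x : op D) (F : set (site D)) : Prop :=
  [/\ finite_set F, Mat F x &
      forall G, finite_set G -> Mat G x -> F `<=` G].

Definition star_automorphism (alpha : op D -> op D) : Prop :=
  [/\ forall x, Mat setT x -> Mat setT (alpha x),
      forall x y, Mat setT x -> Mat setT y ->
        alpha (opadd x y) = opadd (alpha x) (alpha y),
      forall c x, Mat setT x -> alpha (opscale c x) = opscale c (alpha x),
      forall x y, Mat setT x -> Mat setT y ->
        alpha (opmul x y) = opmul (alpha x) (alpha y) &
      forall x, Mat setT x -> alpha (opadj x) = opadj (alpha x)] /\
  (forall x y, Mat setT x -> Mat setT y -> alpha x = alpha y -> x = y) /\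
  (forall y, Mat setT y -> exists2 x, Mat setT x & alpha x = y).

Definition QCA_spread (alpha : op D -> op D) (l : nat) : Prop :=
  star_automorphism alpha /\
  forall x F G, is_Supp x F -> is_Supp (alpha x) G -> G `<=` thicken F l.

Definition unital_star_subalg (Amb A : set (op D)) : Prop :=
  [/\ A `<=` Amb, A opone,
      forall x y, A x -> A y -> A (opadd x y),
      forall c x, A x -> A (opscale c x) &
      forall x y, A x -> A y -> A (opmul x y)] /\
  (forall x, A x -> A (opadj x)).

Definition commutant_in (Amb A : set (op D)) : set (op D) :=
  [set b | Amb b /\ forall a, A a -> opmul a b = opmul b a].

End LocalAlgebra.

(** Geometry for D = d+1: the first coordinate is the index ord0. *)
Section Boundary.
Variable d : nat.
Variable p : site d.+1 -> nat.

Definition Hhalf (n : int) : set (site d.+1) := [set s : site d.+1 | s ord0 <= n].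

Definition Sstrip (n : int) (l : nat) : set (site d.+1) :=
  [set s : site d.+1 | n - l%:Z + 1 <= s ord0 <= n + l%:Z].

Definition proj (s : site d.+1) : site d := [ffun i => s (lift ord0 i)].

(** Identification of Mat(S(n,l),p) with Mat(Z^{D-1},p'): the coarse site
    y in Z^{D-1} is the block {n-l+1,...,n+l} x {y}; so Mat(Y,p') for
    Y a subset of Z^{D-1} is Mat(S(n,l) ∩ ({n-l+1..n+l} x Y), p). *)
Definition coarseMat (n : int) (l : nat) (Y : set (site d)) : set (op d.+1) :=
  Mat p [set s | Sstrip n l s /\ Y (proj s)].

Definition is_coarseSupp (n : int) (l : nat) (x : op d.+1) (Y : set (site d))
  : Prop :=
  [/\ finite_set Y, coarseMat n l Y x &
      forall Y', finite_set Y' -> coarseMat n l Y' x -> Y `<=` Y'].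

Definition invertible_subalg (n : int) (l : nat) (A : set (op d.+1)) (m : nat)
  : Prop :=
  let Amb := coarseMat n l setT in
  unital_star_subalg p Amb A /\
  forall x, Amb x ->
    exists (k : nat) (a b : 'I_k -> op d.+1),
      x = \big[@opadd _/@opzero _]_(i < k) opmul (a i) (b i) /\
      forall i, [/\ A (a i), commutant_in Amb A (b i) &
        forall Yx Ya Yb, is_coarseSupp n l x Yx ->
          is_coarseSupp n l (a i) Ya -> is_coarseSupp n l (b i) Yb ->
          Ya `<=` thicken Yx m /\ Yb `<=` thicken Yx m].

Definition boundary_alg (alpha : op d.+1 -> op d.+1) (n : int) (l : nat)
  : set (op d.+1) :=
  [set x | (exists2 y, Mat p (Hhalf n) y & x = alpha y) /\
           Mat p (Sstrip n l) x].

End Boundary.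

From HB Require Import structures.
From mathcomp Require Import all_boot all_order all_algebra.
From mathcomp Require Import boolp classical_sets cardinality fsbigop.
From mathcomp Require Import complex Rstruct.
From mathcomp Require Import zify.

(* Let x lie in the strip algebra and write x = alpha w.  The spread bound for
   alpha^-1 puts w within distance l of supp x, and expanding w in matrix units at
   the sites of the half-space H(n) splits it as w = sum_i u_i v_i with u_i in
   Mat(H(n)) and v_i in Mat of the complement.  Hence x = sum_i alpha(u_i) alpha(v_i),
   where alpha(u_i) may stick out of the strip to the left and alpha(v_i) to the
   right.  The normalised partial traces over the sites left and right of the strip
   fix x, pass through the factor living on the other side, and preserve
   alpha(Mat(H(n))) (resp. alpha of the complement), because a matrix unit at a
   site farther than l from the boundary is the image of an operator supported on
   the same side.  This gives x = sum_i a_i b_i with a_i in B(n,l) and b_i in the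
   strip and in the image of the complement, hence commuting with B(n,l); all
   supports stay within 2l of supp x. *)

Set Implicit Arguments.
Unset Strict Implicit.
Unset Printing Implicit Defensive.

Import Order.TTheory GRing.Theory Num.Theory.
Local Open Scope classical_set_scope.
Local Open Scope ring_scope.

Section Configurations.
Variable D : nat.
Variable p : site D -> nat.
Local Notation site := (site D).
Local Notation conf := (conf D).
Local Notation valid := (valid p).

Definition upd_at (sg : conf) (s : site) (c : nat) : conf :=
  fun t => if t == s then c else sg t.

Lemma upd_at_same sg s c : upd_at sg s c s = c.
Proof. by rewrite /upd_at eqxx. Qed.

Lemma upd_at_id sg s : upd_at sg s (sg s) = sg.
Proof. by apply/funext => t; rewrite /upd_at; case: eqP => [->|]. Qed.

Lemma upd_at_upd_at sg s a b : upd_at (upd_at sg s a) s b = upd_at sg s b.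
Proof. by apply/funext => t; rewrite /upd_at; case: eqP. Qed.

Lemma upd_at_valid sg s c : valid sg -> (c < p s)%N -> valid (upd_at sg s c).
Proof. by move=> v h t; rewrite /upd_at; case: eqP => [->|]. Qed.

Definition patch (sg : conf) (F : set site) (tau : conf) : conf :=
  fun s => if `[< F s >] then tau s else sg s.

Lemma patch_in sg F tau s : F s -> patch sg F tau s = tau s.
Proof. by move=> Fs; rewrite /patch; case: asboolP. Qed.

Lemma patch_out sg F tau s : ~ F s -> patch sg F tau s = sg s.
Proof. by move=> Fs; rewrite /patch; case: asboolP. Qed.

Lemma patch_valid sg F tau : valid sg -> valid tau -> valid (patch sg F tau).
Proof. by move=> v1 v2 s; rewrite /patch; case: asboolP. Qed.

Definition fibre (F : set site) (sg : conf) : set conf :=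
  [set rho | valid rho /\ agree_off F sg rho].

Lemma fibre_agree F sg rho : agree_off F sg rho -> fibre F rho = fibre F sg.
Proof.
move=> a; apply/seteqP; split=> q [vq aq]; split=> // s ns.
  by rewrite a // aq.
by rewrite -a // aq.
Qed.

Lemma finite_fibre F sg : finite_set F -> finite_set (fibre F sg).
Proof.
move/finite_seqP=> [X ->]; elim: X sg => [|a X IH] sg.
  apply: (sub_finite_set _ (finite_set1 sg)) => rho [_ ag] /=.
  by apply/funext => t; rewrite ag.
(* the fibre over a :: X is covered by the fibres over X of the updates of sg at a *)
apply: (sub_finite_set _ (bigcup_finite (finite_II (p a))
          (fun c _ => IH (upd_at sg a c)))).
move=> rho [v ag]; exists (rho a); first exact: v.
split=> // t /= tX.
rewrite /upd_at; case: eqP => [->//|ta]; apply: ag.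
by rewrite /= in_cons => /orP[/eqP|].
Qed.

End Configurations.

Lemma fsbig_setT_supp1 (T : choiceType) (R : nmodType) (f : T -> R) r0 :
  (forall r, f r != 0 -> r = r0) -> \sum_(r \in [set: T]) f r = f r0.
Proof.
move=> h; rewrite -(fsbig_widen [set r0]) ?fsbig_set1 // => r [_ /= rr0].
by apply/eqP; move: rr0; apply: contra_notT => /h.
Qed.

Lemma fsbig_setT_supp (T : choiceType) (R : nmodType) (P : set T) (f : T -> R) :
  (forall r, f r != 0 -> P r) -> \sum_(r \in [set: T]) f r = \sum_(r \in P) f r.
Proof.
move=> h; rewrite (fsbig_widen P setT) // => r [_ /= nP].
by apply/eqP; move: nP; apply: contra_notT => /h.
Qed.


Section Ampliation.
Variable D : nat.
Variable p : site D -> nat.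
Local Notation site := (site D).
Local Notation conf := (conf D).
Local Notation op := (op D).
Local Notation valid := (valid p).
Local Notation ampl := (ampliation p).
Local Notation fibre := (fibre p).

Lemma ampl_nz F K sg tau : ampl F K -> K sg tau != 0 ->
  [/\ valid sg, valid tau & agree_off F sg tau].
Proof. by case=> h _; apply: h. Qed.

(* if both entries vanish they agree; otherwise run the check from the nonzero one *)
Lemma ampl_intro F K :
  (forall sg tau, K sg tau != 0 -> [/\ valid sg, valid tau & agree_off F sg tau]) ->
  (forall sg tau sg' tau', valid sg' -> valid tau' -> agree_off F sg' tau' ->
     agree_on F sg sg' -> agree_on F tau tau' -> K sg tau != 0 ->
     K sg tau = K sg' tau') ->
  ampl F K.
Proof.
move=> hnz hloc; split=> // sg tau sg' tau' v1 v2 v3 v4 a1 a2 o1 o2.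
have [z|nz] := eqVneq (K sg tau) 0; last exact: hloc.
have [z'|nz'] := eqVneq (K sg' tau') 0; first by rewrite z z'.
by rewrite (hloc sg' tau' sg tau) // => s Fs; [rewrite o1|rewrite o2].
Qed.

Lemma amplW F F' K : F `<=` F' -> ampl F K -> ampl F' K.
Proof.
move=> FF' aK; apply: ampl_intro => [sg tau /(ampl_nz aK) [v1 v2 ag]|].
  by split=> // s nF; apply: ag => /FF'.
move=> sg tau sg' tau' v3 v4 ag' oa ob /(ampl_nz aK) [v1 v2 ag].
case: aK => _; apply=> //.
- move=> s nFs; have [F's|nF's] := pselect (F' s); last exact: ag'.
  by rewrite -oa // -ob // ag.
- by move=> s /FF'; apply: oa.
- by move=> s /FF'; apply: ob.
Qed.

Lemma amplI F G K : ampl F K -> ampl G K -> ampl (F `&` G) K.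
Proof.
move=> aF aG.
have offFG sg tau : K sg tau != 0 -> agree_off (F `&` G) sg tau.
  move=> nz s nFG; have [_ _ agF] := ampl_nz aF nz; have [_ _ agG] := ampl_nz aG nz.
  have [Fs|nFs] := pselect (F s); last exact: agF.
  have [Gs|nGs] := pselect (G s); last exact: agG.
  by case: nFG.
apply: ampl_intro => [sg tau nz|sg tau sg' tau' v3 v4 ag' oa ob nz].
  by have [v1 v2 _] := ampl_nz aF nz; split=> //; apply: offFG.
have [v1 v2 agF] := ampl_nz aF nz.
(* interpolate through r, which agrees with sg on F and with sg' off F *)
pose r := patch sg' F sg; pose r' := patch tau' F tau.
have vr : valid r by apply: patch_valid.
have vr' : valid r' by apply: patch_valid.
transitivity (K r r').
  case: aF => _; apply=> //.
  - by move=> s nFs; rewrite /r /r' !patch_out //; apply: ag' => -[].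
  - by move=> s Fs; rewrite /r patch_in.
  - by move=> s Fs; rewrite /r' patch_in.
case: aG => _; apply=> //.
- move=> s nGs; rewrite /r /r'; have [Fs|nFs] := pselect (F s).
    by rewrite !patch_in //; apply: (offFG _ _ nz) => -[].
  by rewrite !patch_out //; apply: ag' => -[].
- by move=> s nGs; apply: ag' => -[].
- move=> s Gs; rewrite /r; have [Fs|nFs] := pselect (F s).
    by rewrite patch_in //; apply: oa.
  by rewrite patch_out.
- move=> s Gs; rewrite /r'; have [Fs|nFs] := pselect (F s).
    by rewrite patch_in //; apply: ob.
  by rewrite patch_out.
Qed.

Lemma ampl0 F : ampl F (@opzero D).
Proof. by split=> [sg tau|]; rewrite /opzero ?eqxx. Qed.

Lemma ampl1 F : ampl F (opone p).
Proof.
apply: (@amplW set0) => //; split.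
  move=> sg tau; rewrite /opone; case: asboolP => [[-> v] _|]; last by rewrite eqxx.
  by split.
move=> sg tau sg' tau' v1 v2 v3 v4 a1 a2 _ _.
have -> : sg = tau by apply/funext => s; apply: a1.
have -> : sg' = tau' by apply/funext => s; apply: a2.
by rewrite /opone !asboolT.
Qed.

Lemma amplD F x y : ampl F x -> ampl F y -> ampl F (opadd x y).
Proof.
move=> [x1 x2] [y1 y2]; split.
  move=> sg tau; rewrite /opadd; have [z|nz] := eqVneq (x sg tau) 0.
    by rewrite z add0r => /y1.
  by move=> _; apply: x1.
move=> sg tau sg' tau' v1 v2 v3 v4 a1 a2 o1 o2.
by rewrite /opadd (x2 sg tau sg' tau') // (y2 sg tau sg' tau').
Qed.

Lemma amplZ F c x : ampl F x -> ampl F (opscale c x).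
Proof.
move=> [x1 x2]; split.
  by move=> sg tau; rewrite /opscale mulf_eq0 negb_or => /andP[_ /x1].
move=> sg tau sg' tau' v1 v2 v3 v4 a1 a2 o1 o2.
by rewrite /opscale (x2 sg tau sg' tau').
Qed.

Lemma ampl_adj F x : ampl F x -> ampl F (opadj x).
Proof.
move=> [x1 x2]; split.
  move=> sg tau; rewrite /opadj conjC_eq0 => /x1 [v1 v2 a]; split=> // s ns.
  by rewrite a.
move=> sg tau sg' tau' v1 v2 v3 v4 a1 a2 o1 o2; rewrite /opadj (x2 tau sg tau' sg') //.
- by move=> s ns; rewrite a1.
- by move=> s ns; rewrite a2.
Qed.

Lemma opmul_fibre F x y sg tau : ampl F x ->
  opmul x y sg tau = \sum_(rho \in fibre F sg) x sg rho * y rho tau.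
Proof.
move=> ax; rewrite /opmul (fsbig_setT_supp (P := fibre F sg)) // => r.
by rewrite mulf_eq0 negb_or => /andP[/(ampl_nz ax) [_ ? ?] _].
Qed.

Lemma amplM F x y : finite_set F -> ampl F x -> ampl F y -> ampl F (opmul x y).
Proof.
move=> fF ax ay; split.
  move=> sg tau; rewrite /opmul => /(@fsbigN1 _ _ _ unit _ _ (fun _ r => _) tt).
  move=> [r _]; rewrite mulf_eq0 negb_or => /andP[/(ampl_nz ax) [v1 _ a1]].
  by move=> /(ampl_nz ay) [_ v3 a2]; split=> // s ns; rewrite a1 // a2.
move=> sg tau sg' tau' v1 v2 v3 v4 a1 a2 o1 o2.
have [_ x2] := ax; have [_ y2] := ay.
rewrite (opmul_fibre _ _ _ ax) (opmul_fibre _ _ _ ax).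
(* the fibres over sg and sg' are in bijection by copying sg' off F *)
rewrite (reindex_fsbig (fun r => patch sg' F r) (fibre F sg) (fibre F sg')).
  apply: eq_fsbigr => r /set_mem [vr ar]; congr (_ * _).
    apply: x2 => //; first exact: patch_valid.
    - by move=> s ns; rewrite patch_out.
    - by move=> s Fs; rewrite patch_in.
  apply: y2 => //; first exact: patch_valid.
  - by move=> s ns; rewrite -ar // a1.
  - by move=> s ns; rewrite patch_out // a2.
  - by move=> s Fs; rewrite patch_in.
split.
- move=> r [vr ar]; split; first exact: patch_valid.
  by move=> s ns; rewrite patch_out.
- move=> r1 r2 /set_mem [_ a1'] /set_mem [_ a2'] e; apply/funext => s.
  have [Fs|nFs] := pselect (F s).
    by move/(congr1 (fun f => f s)): e; rewrite !patch_in.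
  by rewrite -a1' // -a2'.
- move=> r [vr ar]; exists (patch sg F r).
    split; first exact: patch_valid.
    by move=> s ns; rewrite patch_out.
  apply/funext => s; have [Fs|nFs] := pselect (F s).
    by rewrite !patch_in.
  by rewrite !patch_out // ar.
Qed.

Lemma opmulA F x y z : finite_set F -> ampl F x -> ampl F y -> ampl F z ->
  opmul (opmul x y) z = opmul x (opmul y z).
Proof.
move=> fF ax ay az; apply/funext => sg; apply/funext => tau.
rewrite (opmul_fibre _ _ _ (amplM fF ax ay)) (opmul_fibre _ _ _ ax).
under eq_fsbigr do rewrite (opmul_fibre _ _ _ ax) mulr_fsuml.
transitivity (\sum_(r' \in fibre F sg) \sum_(r \in fibre F sg)
                x sg r' * y r' r * z r tau).
  by rewrite exchange_fsbig //; apply: finite_fibre.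
apply: eq_fsbigr => r' /set_mem [_ ar].
rewrite (opmul_fibre _ _ _ ay) (fibre_agree p ar) mulr_fsumr.
by apply: eq_fsbigr => r _; rewrite mulrA.
Qed.

Lemma opmul1 F x : ampl F x -> opmul x (opone p) = x.
Proof.
move=> ax; apply/funext => sg; apply/funext => tau.
rewrite /opmul (fsbig_setT_supp1 (r0 := tau)).
  rewrite /opone; case: asboolP => [_|h]; first by rewrite mulr1.
  have [z|/(ampl_nz ax) [_ v _]] := eqVneq (x sg tau) 0; first by rewrite z mul0r.
  by case: h.
by move=> r; rewrite /opone; case: asboolP => [[-> _]//|_]; rewrite mulr0 eqxx.
Qed.

Lemma op1mul F x : ampl F x -> opmul (opone p) x = x.
Proof.
move=> ax; apply/funext => sg; apply/funext => tau.
rewrite /opmul (fsbig_setT_supp1 (r0 := sg)).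
  rewrite /opone; case: asboolP => [_|h]; first by rewrite mul1r.
  have [z|/(ampl_nz ax) [v _ _]] := eqVneq (x sg tau) 0; first by rewrite z mulr0.
  by case: h.
by move=> r; rewrite /opone; case: asboolP => [[-> _]//|_]; rewrite mul0r eqxx.
Qed.

End Ampliation.

Section MatrixUnits.
Variable D : nat.
Variable p : site D -> nat.
Local Notation site := (site D).
Local Notation conf := (conf D).
Local Notation op := (op D).
Local Notation valid := (valid p).
Local Notation ampl := (ampliation p).

Definition munit (s : site) (a b : nat) : op :=
  fun sg tau => if `[< valid sg /\ valid tau /\ sg s = a /\ tau = upd_at sg s b >]
                then 1 else 0.

Lemma ampl_munit s a b : ampl [set s] (munit s a b).
Proof.
have upd_at_off u w : agree_off [set s] u w -> w = upd_at u s (w s).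
  by move=> h; apply/funext => t; rewrite /upd_at; case: eqP => [->//|/h].
apply: ampl_intro => [sg tau|sg tau sg' tau' v3 v4 a' o1 o2].
  rewrite /munit; case: asboolP => [[v1 [v2 [_ e]]] _|]; last by rewrite eqxx.
  by split=> // t /= nts; rewrite e /upd_at; case: eqP.
rewrite /munit; case: asboolP => [[v1 [v2 [e1 e2]]] _|]; last by rewrite eqxx.
rewrite asboolT //; split=> //; split=> //; split; first by rewrite -(o1 s).
by rewrite (upd_at_off _ _ a') -(o2 s) // e2 upd_at_same.
Qed.

Lemma opmul_munitl s a b K sg tau :
  opmul (munit s a b) K sg tau =
  if `[< valid sg /\ sg s = a /\ (b < p s)%N >] then K (upd_at sg s b) tau else 0.
Proof.
rewrite /opmul (fsbig_setT_supp1 (r0 := upd_at sg s b)).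
  rewrite /munit; case: asboolP => [[v1 [v2 [h1 _]]]|h].
    rewrite asboolT ?mul1r //; split=> //; split=> //.
    by have := v2 s; rewrite upd_at_same.
  case: asboolP => [[v [h1 h2]]|]; last by rewrite mul0r.
  by case: h; do 2 split => //; exact: upd_at_valid.
by move=> r; rewrite /munit; case: asboolP => [[_ [_ [_ ->]]]//|_]; rewrite mul0r eqxx.
Qed.

Lemma opmul_munitr s a b K sg tau :
  opmul K (munit s a b) sg tau =
  if `[< valid tau /\ tau s = b /\ (a < p s)%N >] then K sg (upd_at tau s a) else 0.
Proof.
rewrite /opmul (fsbig_setT_supp1 (r0 := upd_at tau s a)).
  rewrite /munit; case: asboolP => [[v1 [v2 [h1 h2]]]|h].
    rewrite asboolT ?mulr1 //; split=> //; split; first by rewrite h2 upd_at_same.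
    by have := v1 s; rewrite h1.
  case: asboolP => [[v [h1 h2]]|]; last by rewrite mulr0.
  case: h; split; first exact: upd_at_valid.
  split=> //; split; first by rewrite upd_at_same.
  by rewrite upd_at_upd_at -h1 upd_at_id.
move=> r; rewrite /munit; case: asboolP => [[_ [_ [h1 ->]]]|_]; last by rewrite mulr0 eqxx.
by move=> _; rewrite upd_at_upd_at -h1 upd_at_id.
Qed.

(* Commuting with the matrix units [munit s a a] makes y diagonal at s, and
   commuting with [munit s a b] makes its diagonal blocks equal. *)
Lemma ampl_commute_munits G s y : ampl G y ->
  (forall a b, (a < p s)%N -> (b < p s)%N -> opmul (munit s a b) y = opmul y (munit s a b)) ->
  ampl (G `&` [set t | t <> s]) y.
Proof.
move=> ay hc; apply: (amplI ay).
have eqn a b sg tau : (a < p s)%N -> (b < p s)%N ->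
    opmul (munit s a b) y sg tau = opmul y (munit s a b) sg tau.
  by move=> ha hb; rewrite hc.
have diag sg tau : y sg tau != 0 -> sg s = tau s.
  move=> nz; have [v1 v2 _] := ampl_nz ay nz.
  have := eqn (sg s) (sg s) sg tau (v1 s) (v1 s).
  rewrite opmul_munitl opmul_munitr asboolT; last by split.
  rewrite upd_at_id; case: asboolP => [[_ [-> _]] //|_ yz].
  by rewrite yz eqxx in nz.
apply: ampl_intro => [sg tau nz|sg tau sg' tau' v3 v4 a' o1 o2 nz].
  have [v1 v2 _] := ampl_nz ay nz; split=> // t /= nt.
  have -> : t = s by apply: contra_notP nt.
  exact: diag.
have [v1 v2 _] := ampl_nz ay nz.
have e1 := a' s (fun h => h erefl).
have hs' : sg' = upd_at sg s (sg' s).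
  by apply/funext => t; rewrite /upd_at; case: eqP => [->//|ts]; rewrite o1.
have ht' : tau' = upd_at tau s (sg' s).
  by apply/funext => t; rewrite /upd_at; case: eqP => [->|ts]; rewrite ?e1 ?o2.
have := eqn (sg' s) (sg s) (upd_at sg s (sg' s)) tau (v3 s) (v1 s).
rewrite opmul_munitl opmul_munitr asboolT; last first.
  by split; [exact: upd_at_valid|rewrite upd_at_same].
rewrite asboolT; last by split=> //; split=> //; rewrite (diag _ _ nz).
by rewrite upd_at_upd_at upd_at_id -hs' -ht'.
Qed.

Lemma opmul_disjoint_entry F G x y sg tau : ampl F x -> ampl G y ->
  (forall t, F t -> ~ G t) ->
  opmul x y sg tau = x sg (patch sg F tau) * y (patch sg F tau) tau.
Proof.
move=> ax ay dFG; rewrite /opmul (fsbig_setT_supp1 (r0 := patch sg F tau)) // => r.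
rewrite mulf_eq0 negb_or => /andP[/(ampl_nz ax) [_ _ a1] /(ampl_nz ay) [_ _ a2]].
apply/funext => t; rewrite /patch; case: asboolP => [Ft|nFt]; last by rewrite a1.
by rewrite a2 //; apply: dFG.
Qed.

Lemma opmul_disjointC F G x y : ampl F x -> ampl G y -> (forall t, F t -> ~ G t) ->
  opmul x y = opmul y x.
Proof.
move=> ax ay dFG; have dGF t : G t -> ~ F t by move=> Gt /dFG.
apply/funext => sg; apply/funext => tau.
rewrite (opmul_disjoint_entry _ _ ax ay dFG) (opmul_disjoint_entry _ _ ay ax dGF).
set r0 := patch sg F tau; set r1 := patch sg G tau.
have nz_agree u : u != 0 -> u = x sg r0 * y r0 tau \/ u = y sg r1 * x r1 tau ->
    [/\ valid sg, valid tau & forall t, ~ F t -> ~ G t -> sg t = tau t].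
  move=> nu [eu|eu]; rewrite eu mulf_eq0 negb_or in nu; case/andP: nu.
    move=> /(ampl_nz ax) [v1 v0 a1] /(ampl_nz ay) [_ v2 a2]; split=> // t nF nG.
    by rewrite a1 // a2.
  move=> /(ampl_nz ay) [v1 v0 a1] /(ampl_nz ax) [_ v2 a2]; split=> // t nF nG.
  by rewrite a1 // a2.
(* both sides read x on F and y on G, so they agree as soon as sg = tau off F and G *)
have swap : [/\ valid sg, valid tau & forall t, ~ F t -> ~ G t -> sg t = tau t] ->
    x sg r0 * y r0 tau = y sg r1 * x r1 tau.
  move=> [v1 v2 ag]; have vr0 : valid r0 by apply: patch_valid.
  have vr1 : valid r1 by apply: patch_valid.
  rewrite mulrC; congr (_ * _).
    case: ay => _; apply=> //.
    - by move=> t nG; rewrite /r0 /patch; case: asboolP => // nF; exact: ag.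
    - by move=> t nG; rewrite /r1 patch_out.
    - by move=> t Gt; rewrite /r0 patch_out //; apply: dGF.
    - by move=> t Gt; rewrite /r1 patch_in.
  case: ax => _; apply=> //.
  - by move=> t nF; rewrite /r0 patch_out.
  - by move=> t nF; rewrite /r1 /patch; case: asboolP => // nG; exact: ag.
  - by move=> t Ft; rewrite /r1 patch_out //; apply: dFG.
  - by move=> t Ft; rewrite /r0 patch_in.
have [z|nz] := eqVneq (x sg r0 * y r0 tau) 0.
  have [z'|nz'] := eqVneq (y sg r1 * x r1 tau) 0; first by rewrite z z'.
  by apply: swap; apply: (nz_agree _ nz'); right.
by apply: swap; apply: (nz_agree _ nz); left.
Qed.

End MatrixUnits.

Section OperatorSums.
Variable D : nat.
Variable p : site D -> nat.
Local Notation op := (op D).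
Local Notation ampl := (ampliation p).

Lemma opaddA : associative (@opadd D).
Proof. by move=> x y z; apply/funext => a; apply/funext => b; rewrite /opadd addrA. Qed.

Lemma opaddC : commutative (@opadd D).
Proof. by move=> x y; apply/funext => a; apply/funext => b; rewrite /opadd addrC. Qed.

Lemma op0add : left_id (@opzero D) (@opadd D).
Proof. by move=> x; apply/funext => a; apply/funext => b; rewrite /opadd /opzero add0r. Qed.

HB.instance Definition _ :=
  Monoid.isComLaw.Build op (@opzero D) (@opadd D) opaddA opaddC op0add.

Lemma opsumE (I : Type) (r : seq I) (P : pred I) (F : I -> op) sg tau :
  (\big[@opadd D/@opzero D]_(i <- r | P i) F i) sg tau = \sum_(i <- r | P i) F i sg tau.
Proof.
elim: r => [|a r IH]; first by rewrite !big_nil.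
by rewrite !big_cons; case: (P a) => //; rewrite /opadd IH.
Qed.

Lemma ampl_sum F (I : Type) (r : seq I) (P : pred I) (f : I -> op) :
  (forall i, P i -> ampl F (f i)) -> ampl F (\big[@opadd D/@opzero D]_(i <- r | P i) f i).
Proof.
move=> h; elim: r => [|a r IH]; first by rewrite big_nil; exact: ampl0.
by rewrite big_cons; case: ifP => Pa //; exact: amplD (h _ Pa) IH.
Qed.

Lemma op0mul (z : op) : opmul (@opzero D) z = @opzero D.
Proof.
by apply/funext => sg; apply/funext => tau; rewrite /opmul fsbig1 // => r _; exact: mul0r.
Qed.

Lemma opmul0 (z : op) : opmul z (@opzero D) = @opzero D.
Proof.
by apply/funext => sg; apply/funext => tau; rewrite /opmul fsbig1 // => r _; exact: mulr0.
Qed.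

Lemma opmulDl F x y z : finite_set F -> ampl F x -> ampl F y ->
  opmul (opadd x y) z = opadd (opmul x z) (opmul y z).
Proof.
move=> fF ax ay; apply/funext => sg; apply/funext => tau.
rewrite /opadd (opmul_fibre _ _ _ (amplD ax ay)) !(opmul_fibre _ _ _ ax).
rewrite (opmul_fibre _ _ _ ay) -fsbig_split; last exact: finite_fibre.
by apply: eq_fsbigr => r _; rewrite mulrDl.
Qed.

Lemma opmulDr F x y z : finite_set F -> ampl F z ->
  opmul z (opadd x y) = opadd (opmul z x) (opmul z y).
Proof.
move=> fF az; apply/funext => sg; apply/funext => tau.
rewrite /opadd !(opmul_fibre _ _ _ az) -fsbig_split; last exact: finite_fibre.
by apply: eq_fsbigr => r _; rewrite mulrDr.
Qed.

Lemma opmulZl c (x z : op) : opmul (opscale c x) z = opscale c (opmul x z).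
Proof.
apply/funext => sg; apply/funext => tau; rewrite /opscale /opmul mulr_fsumr.
by apply: eq_fsbigr => r _; rewrite mulrA.
Qed.

Lemma opmulZr c (x z : op) : opmul z (opscale c x) = opscale c (opmul z x).
Proof.
apply/funext => sg; apply/funext => tau; rewrite /opscale /opmul mulr_fsumr.
by apply: eq_fsbigr => r _; rewrite mulrCA.
Qed.

Lemma opmul_suml F (I : Type) (r : seq I) (P : pred I) (f : I -> op) z :
  finite_set F -> (forall i, P i -> ampl F (f i)) ->
  opmul (\big[@opadd D/@opzero D]_(i <- r | P i) f i) z =
  \big[@opadd D/@opzero D]_(i <- r | P i) opmul (f i) z.
Proof.
move=> fF h; elim: r => [|a r IH]; first by rewrite !big_nil op0mul.
rewrite !big_cons; case: ifP => Pa //.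
by rewrite (opmulDl _ fF (h _ Pa) (ampl_sum r h)) IH.
Qed.

Lemma opmul_sumr F (I : Type) (r : seq I) (P : pred I) (f : I -> op) z :
  finite_set F -> ampl F z ->
  opmul z (\big[@opadd D/@opzero D]_(i <- r | P i) f i) =
  \big[@opadd D/@opzero D]_(i <- r | P i) opmul z (f i).
Proof.
move=> fF az; elim: r => [|a r IH]; first by rewrite !big_nil opmul0.
by rewrite !big_cons; case: ifP => Pa //; rewrite (opmulDr _ _ fF az) IH.
Qed.

End OperatorSums.

Section PartialTrace.
Variable D : nat.
Variable p : site D -> nat.
Hypothesis p_gt0 : forall s, (0 < p s)%N.
Local Notation site := (site D).
Local Notation conf := (conf D).
Local Notation op := (op D).
Local Notation valid := (valid p).
Local Notation ampl := (ampliation p).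
Local Notation munit := (munit p).

(* The normalised partial trace over site s, tensored with the identity at s:
   the conditional expectation onto the operators acting trivially at s. *)
Definition ptrace (s : site) (z : op) : op :=
  \big[@opadd D/@opzero D]_(a < p s) \big[@opadd D/@opzero D]_(b < p s)
    opscale (p s)%:R^-1 (opmul (munit s a b) (opmul z (munit s b a))).

Lemma ptraceE s z sg tau : ptrace s z sg tau =
  if `[< valid sg /\ valid tau /\ sg s = tau s >] then
    (p s)%:R^-1 * \sum_(b < p s) z (upd_at sg s b) (upd_at tau s b) else 0.
Proof.
rewrite /ptrace opsumE.
under eq_bigr => a _ do rewrite opsumE /opscale.
under eq_bigr => a _ do under eq_bigr => b _ do rewrite opmul_munitl opmul_munitr.
have [v1|v1] := pselect (valid sg); last first.
  rewrite asboolF; last by case.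
  by rewrite big1 // => a _; rewrite big1 // => b _; rewrite asboolF ?mulr0 //; case.
have [v2|v2] := pselect (valid tau); last first.
  rewrite asboolF; last by case=> _ [].
  rewrite big1 // => a _; rewrite big1 // => b _.
  case: asboolP => _; last by rewrite mulr0.
  by rewrite asboolF ?mulr0 //; case.
rewrite (bigD1 (Ordinal (v1 s))) //= [X in _ + X]big1 ?addr0; last first.
  move=> a /eqP ne; rewrite big1 // => b _; rewrite asboolF ?mulr0 //.
  by case=> _ [h _]; apply: ne; exact/val_inj.
have [e|ne] := eqVneq (sg s) (tau s).
  rewrite asboolT; last by split.
  rewrite mulr_sumr; apply: eq_bigr => b _.
  by rewrite asboolT; [rewrite asboolT|]; do 2 split=> //.
rewrite asboolF; last by case=> _ [_ h]; move/eqP: ne.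
rewrite big1 // => b _; rewrite asboolT; last by split.
by rewrite asboolF ?mulr0 //; case=> _ [h _]; move/eqP: ne; rewrite h.
Qed.

Lemma ampl_ptrace_site s z : ampl [set t | t <> s] (ptrace s z).
Proof.
apply: ampl_intro => [sg tau|sg tau sg' tau' v3 v4 a' o1 o2].
  rewrite ptraceE; case: asboolP => [[v1 [v2 e]] _|]; last by rewrite eqxx.
  split=> // t /= nt; have -> : t = s by apply: contra_notP nt.
  exact: e.
rewrite !ptraceE; case: asboolP => [[v1 [v2 e]] _|]; last by rewrite eqxx.
have e' := a' s (fun h => h erefl).
have h1 b : upd_at sg s b = upd_at sg' s b.
  by apply/funext => t; rewrite /upd_at; case: eqP => // /o1.
have h2 b : upd_at tau s b = upd_at tau' s b.
  by apply/funext => t; rewrite /upd_at; case: eqP => // /o2.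
rewrite asboolT; last by split.
by congr (_ * _); apply: eq_bigr => b _; rewrite h1 h2.
Qed.

Lemma ampl_ptrace G s z : finite_set G -> ampl G z ->
  ampl (G `&` [set t | t <> s]) (ptrace s z).
Proof.
move=> fG az.
have fGs : finite_set (G `|` [set s]) by rewrite finite_setU; split.
have aGs : ampl (G `|` [set s]) (ptrace s z).
  have aE a b : ampl (G `|` [set s]) (munit s a b).
    by apply: amplW (ampl_munit _ _ _ _) => t ->; right.
  apply: ampl_sum => a _; apply: ampl_sum => b _; apply: amplZ.
  by apply: amplM => //; apply: amplM => //; apply: amplW az => t; left.
apply: (amplW _ (amplI aGs (ampl_ptrace_site s z))).
by move=> t [[Gt|/= ->] nt].
Qed.

Lemma ptrace_id G s z : ampl G z -> ~ G s -> ptrace s z = z.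
Proof.
move=> az nGs; apply/funext => sg; apply/funext => tau; rewrite ptraceE.
case: asboolP => [[v1 [v2 e]]|nc]; last first.
  have [//|/(ampl_nz az) [v1 v2 a]] := eqVneq (z sg tau) 0.
  by case: nc; do 2 split=> //; exact: a.
have [ag|nag] := pselect (agree_off G sg tau).
  have -> : \sum_(b < p s) z (upd_at sg s b) (upd_at tau s b) = \sum_(b < p s) z sg tau.
    apply: eq_bigr => b _; case: az => _; apply=> //.
    - exact: upd_at_valid v1 (ltn_ord b).
    - exact: upd_at_valid v2 (ltn_ord b).
    - by move=> t nt; rewrite /upd_at; case: eqP => // _; exact: ag.
    - by move=> t Gt; rewrite /upd_at; case: eqP => // ts; rewrite ts in Gt.
    - by move=> t Gt; rewrite /upd_at; case: eqP => // ts; rewrite ts in Gt.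
  rewrite sumr_const card_ord -[z sg tau *+ p s]mulr_natl mulrA mulVf ?mul1r //.
  by rewrite pnatr_eq0 -lt0n.
have -> : z sg tau = 0.
  by apply/eqP; apply: contra_notT nag => /(ampl_nz az) [].
rewrite big1 ?mulr0 // => b _; apply/eqP; apply: contra_notT nag.
move=> /(ampl_nz az) [_ _ a] t nt; have [->//|ts] := eqVneq t s.
by have := a t nt; rewrite /upd_at (negPf ts).
Qed.

Lemma ptraceD s x y : ptrace s (opadd x y) = opadd (ptrace s x) (ptrace s y).
Proof.
apply/funext => sg; apply/funext => tau; rewrite /opadd !ptraceE.
by case: asboolP => _; rewrite ?addr0 // -mulrDr big_split.
Qed.

Lemma ptrace0 s : ptrace s (@opzero D) = @opzero D.
Proof.
apply/funext => sg; apply/funext => tau; rewrite ptraceE.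
by case: asboolP => _ //; rewrite big1 ?mulr0.
Qed.

Lemma ptrace_sum s (I : Type) (r : seq I) (f : I -> op) :
  ptrace s (\big[@opadd D/@opzero D]_(i <- r) f i) =
  \big[@opadd D/@opzero D]_(i <- r) ptrace s (f i).
Proof.
elim: r => [|a r IH]; first by rewrite !big_nil ptrace0.
by rewrite !big_cons ptraceD IH.
Qed.

Section Multiplicativity.
Variables (F G : set site) (s : site) (z w : op).
Hypotheses (fF : finite_set F) (fG : finite_set G).
Hypotheses (az : ampl F z) (aw : ampl G w) (nGs : ~ G s).

Let K := F `|` G `|` [set s].
Let fK : finite_set K. Proof. by rewrite !finite_setU. Qed.
Let aFK x : ampl F x -> ampl K x. Proof. by apply: amplW => t Ft; left; left. Qed.
Let aGK x : ampl G x -> ampl K x. Proof. by apply: amplW => t Gt; left; right. Qed.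
Let aEK a b : ampl K (munit s a b).
Proof. by apply: amplW (ampl_munit _ _ _ _) => t ->; right. Qed.
Let wE a b : opmul w (munit s a b) = opmul (munit s a b) w.
Proof.
by apply: (opmul_disjointC aw (ampl_munit _ _ _ _)) => t Gt /= ts; case: nGs; rewrite -ts.
Qed.

Lemma ptraceMr : ptrace s (opmul z w) = opmul (ptrace s z) w.
Proof.
have aFz := aFK az; have aGw := aGK aw.
rewrite /ptrace (@opmul_suml D p K) //; last first.
  move=> a _; apply: ampl_sum => b _; apply: amplZ.
  by apply: amplM => //; apply: amplM.
apply: eq_bigr => a _; rewrite (@opmul_suml D p K) //; last first.
  by move=> b _; apply: amplZ; apply: amplM => //; apply: amplM.
apply: eq_bigr => b _; rewrite opmulZl; congr opscale.
rewrite (opmulA fK aFz aGw (aEK _ _)) wE -(opmulA fK aFz (aEK _ _) aGw).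
by rewrite -(opmulA fK (aEK _ _) _ aGw) //; apply: amplM.
Qed.

Lemma ptraceMl : ptrace s (opmul w z) = opmul w (ptrace s z).
Proof.
have aFz := aFK az; have aGw := aGK aw.
rewrite /ptrace (@opmul_sumr D p K) //; apply: eq_bigr => a _.
rewrite (@opmul_sumr D p K) //; apply: eq_bigr => b _.
rewrite opmulZr; congr opscale.
rewrite (opmulA fK aGw aFz (aEK _ _)) -(opmulA fK (aEK _ _) aGw); last exact: amplM.
by rewrite -wE (opmulA fK aGw (aEK _ _)) //; apply: amplM.
Qed.

End Multiplicativity.

End PartialTrace.
Section IteratedPartialTrace.
Variable D : nat.
Variable p : site D -> nat.
Hypothesis p_gt0 : forall s, (0 < p s)%N.
Local Notation site := (site D).
Local Notation op := (op D).
Local Notation ampl := (ampliation p).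

Definition ptraces (L : seq site) (z : op) : op := foldr (ptrace p) z L.

Lemma ampl_ptraces L G z : finite_set G -> ampl G z ->
  ampl (G `&` [set t | t \notin L]) (ptraces L z).
Proof.
move=> fG az; elim: L => [|s L IH] /=; first by apply: amplW az => t Gt; split.
apply: amplW (ampl_ptrace s (finite_setIl _ fG) IH) => t [[Gt tL] ts].
by split=> //=; rewrite in_cons negb_or tL andbT; apply/eqP.
Qed.

Lemma ptraces_id L G z : ampl G z -> (forall t, t \in L -> ~ G t) -> ptraces L z = z.
Proof.
move=> az; elim: L => [//|s L IH] hL /=.
rewrite IH => [|t tL]; last by apply: hL; rewrite in_cons tL orbT.
by apply: (ptrace_id p_gt0 az); apply: hL; rewrite in_cons eqxx.
Qed.

Lemma ptracesMr L F G z w : finite_set F -> finite_set G -> ampl F z -> ampl G w ->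
  (forall t, t \in L -> ~ G t) -> ptraces L (opmul z w) = opmul (ptraces L z) w.
Proof.
move=> fF fG az aw; elim: L => [//|s L IH] hL /=.
rewrite IH => [|t tL]; last by apply: hL; rewrite in_cons tL orbT.
apply: (ptraceMr (finite_setIl _ fF) fG (ampl_ptraces L fF az) aw).
by apply: hL; rewrite in_cons eqxx.
Qed.

Lemma ptracesMl L F G z w : finite_set F -> finite_set G -> ampl F z -> ampl G w ->
  (forall t, t \in L -> ~ G t) -> ptraces L (opmul w z) = opmul w (ptraces L z).
Proof.
move=> fF fG az aw; elim: L => [//|s L IH] hL /=.
rewrite IH => [|t tL]; last by apply: hL; rewrite in_cons tL orbT.
apply: (ptraceMl (finite_setIl _ fF) fG (ampl_ptraces L fF az) aw).
by apply: hL; rewrite in_cons eqxx.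
Qed.

Lemma ptraces_sum L (I : Type) (r : seq I) (f : I -> op) :
  ptraces L (\big[@opadd D/@opzero D]_(i <- r) f i) =
  \big[@opadd D/@opzero D]_(i <- r) ptraces L (f i).
Proof. by elim: L => [//|s L IH] /=; rewrite IH ptrace_sum. Qed.

Lemma ptraces_sum_of_products k (A B : 'I_k -> op) L R TA TB :
  finite_set TA -> finite_set TB -> (forall i, ampl TA (A i)) -> (forall i, ampl TB (B i)) ->
  (forall t, t \in L -> ~ TB t) -> (forall t, t \in R -> ~ TA t) ->
  ptraces L (ptraces R (\big[@opadd D/@opzero D]_(i < k) opmul (A i) (B i))) =
  \big[@opadd D/@opzero D]_(i < k) opmul (ptraces L (A i)) (ptraces R (B i)).
Proof.
move=> fA fB aA aB LB RA; rewrite !ptraces_sum; apply: eq_bigr => i _.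
rewrite (ptracesMl fB fA (aB i) (aA i) RA).
apply: (ptracesMr fA (finite_setIl _ fB) (aA i) (ampl_ptraces R fB (aB i))).
by move=> t /LB tB [].
Qed.

End IteratedPartialTrace.

Section SumsOfProducts.
Variable D : nat.
Variable p : site D -> nat.
Hypothesis p_gt0 : forall s, (0 < p s)%N.
Local Notation site := (site D).
Local Notation op := (op D).
Local Notation valid := (valid p).
Local Notation ampl := (ampliation p).
Local Notation munit := (munit p).

Inductive sum_of_products (P Q : op -> Prop) : op -> Prop :=
| sop0 : sum_of_products P Q (@opzero D)
| sopS u v r : P u -> Q v -> sum_of_products P Q r ->
    sum_of_products P Q (opadd (opmul u v) r).

Lemma sopD P Q x y :
  sum_of_products P Q x -> sum_of_products P Q y -> sum_of_products P Q (opadd x y).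
Proof.
elim=> [|u v r Pu Qv _ IH] sy; first by rewrite op0add.
by rewrite -opaddA; apply: sopS => //; exact: IH.
Qed.

Lemma sop_sum P Q (I : Type) (r : seq I) (f : I -> op) :
  (forall i, sum_of_products P Q (f i)) ->
  sum_of_products P Q (\big[@opadd D/@opzero D]_(i <- r) f i).
Proof.
move=> h; elim: r => [|a r IH]; first by rewrite big_nil; exact: sop0.
by rewrite big_cons; apply: sopD.
Qed.

Lemma sopW P Q P' Q' x : (forall u, P u -> P' u) -> (forall v, Q v -> Q' v) ->
  sum_of_products P Q x -> sum_of_products P' Q' x.
Proof.
move=> hP hQ; elim=> [|u v r Pu Qv _ IH]; first exact: sop0.
by apply: sopS => //; [apply: hP|apply: hQ].
Qed.

Lemma sop_mull K P Q P' e x : finite_set K -> ampl K e ->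
  (forall u, P u -> ampl K u) -> (forall v, Q v -> ampl K v) ->
  (forall u, P u -> P' (opmul e u)) ->
  sum_of_products P Q x -> sum_of_products P' Q (opmul e x).
Proof.
move=> fK aK hP hQ hP'; elim=> [|u v r Pu Qv dr IH]; first by rewrite opmul0; exact: sop0.
rewrite (opmulDr _ _ fK aK) -(opmulA fK aK (hP _ Pu) (hQ _ Qv)).
by apply: sopS => //; apply: hP'.
Qed.

Lemma sum_of_productsP P Q x : sum_of_products P Q x ->
  exists k (u v : 'I_k -> op),
    x = \big[@opadd D/@opzero D]_(i < k) opmul (u i) (v i) /\ forall i, P (u i) /\ Q (v i).
Proof.
elim=> [|u0 v0 r Pu Qv _ [k [u [v [-> huv]]]]].
  by exists 0%N, (fun=> @opzero D), (fun=> @opzero D); split=> [|[]//]; rewrite big_ord0.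
pose ext (w0 : op) (w : 'I_k -> op) (i : 'I_k.+1) :=
  if unlift ord0 i is Some j then w j else w0.
exists k.+1, (ext u0 u), (ext v0 v); split.
  by rewrite big_ord_recl /ext unlift_none; congr opadd; apply: eq_bigr => i _; rewrite liftK.
by move=> i; rewrite /ext; case: (unliftP ord0 i) => [j _|_] //; apply: huv.
Qed.

Definition munit_coef (s : site) (a b : nat) (y : op) : op :=
  opscale (p s)%:R (ptrace p s (opmul (munit s b a) y)).

Lemma munit_expansion G s y : ampl G y ->
  y = \big[@opadd D/@opzero D]_(a < p s) \big[@opadd D/@opzero D]_(b < p s)
        opmul (munit s a b) (munit_coef s a b y).
Proof.
move=> ay; apply/funext => sg; apply/funext => tau.
rewrite opsumE; under eq_bigr => a _ do rewrite opsumE.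
have entry (a b : 'I_(p s)) : opmul (munit s a b) (munit_coef s a b y) sg tau =
    if `[< valid sg /\ valid tau /\ sg s = a /\ tau s = b >] then y sg tau else 0.
  rewrite opmul_munitl /munit_coef /opscale ptraceE.
  case: asboolP => [[v1 [e1 _]]|h]; last first.
    by rewrite asboolF // => -[v1 [v2 [e1 _]]]; apply: h.
  have vb : valid (upd_at sg s b) by apply: upd_at_valid.
  case: asboolP => [[_ [v2 e2]]|h]; last first.
    rewrite mulr0 asboolF // => -[_ [v2 [_ e2]]]; apply: h; do 2 split => //.
    by rewrite upd_at_same e2.
  rewrite upd_at_same in e2; rewrite asboolT; last by do 3 split => //.
  rewrite (bigD1 b) //= [X in _ + X]big1 ?addr0; last first.
    move=> c /eqP nc; rewrite opmul_munitl upd_at_upd_at upd_at_same asboolF ?mulr0 //.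
    by case=> _ [e _]; apply: nc; apply: val_inj.
  rewrite opmul_munitl upd_at_upd_at upd_at_same asboolT; last first.
    by do 2 split => //; exact: upd_at_valid.
  rewrite upd_at_upd_at -e1 upd_at_id e2 upd_at_id.
  by rewrite mulrA mulfV ?mul1r // pnatr_eq0 -lt0n.
under eq_bigr => a _ do under eq_bigr => b _ do rewrite entry.
have [z|/(ampl_nz ay) [v1 v2 _]] := eqVneq (y sg tau) 0.
  by rewrite z big1 // => a _; rewrite big1 // => b _; case: asboolP.
rewrite (bigD1 (Ordinal (v1 s))) //= [X in _ + X]big1 ?addr0; last first.
  move=> a /eqP na; rewrite big1 // => b _; rewrite asboolF //.
  by case=> _ [_ [e _]]; apply: na; apply: val_inj.
rewrite (bigD1 (Ordinal (v2 s))) //= [X in _ + X]big1 ?addr0; last first.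
  move=> b /eqP nb; rewrite asboolF //.
  by case=> _ [_ [_ e]]; apply: nb; apply: val_inj.
by rewrite asboolT.
Qed.

Lemma sop_split_seq H (X : seq site) G y : finite_set G -> ampl G y ->
  G `&` H `<=` [set` X] ->
  sum_of_products (ampl (G `&` H)) (ampl (G `&` ~` H)) y.
Proof.
elim: X G y => [|s X IH] G y fG ay hX.
  have -> : y = opadd (opmul (opone p) y) (@opzero D).
    by rewrite (op1mul ay) opaddC op0add.
  apply: sopS; [exact: ampl1| |exact: sop0].
  by apply: amplW ay => t Gt; split=> // Ht; have := hX t (conj Gt Ht).
have [[Gs Hs]|nsGH] := pselect ((G `&` H) s); last first.
  apply: IH => // t tGH; have := hX t tGH; rewrite /= in_cons => /orP[/eqP ts|//].
  by rewrite ts in tGH.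
(* expand y in matrix units at s and split the coefficients, which act trivially at s *)
rewrite (munit_expansion s ay); apply: sop_sum => a; apply: sop_sum => b.
pose G' := G `&` [set t | t <> s].
have fG' : finite_set G' by apply: finite_setIl.
have aEG c e : ampl G (munit s c e) by apply: amplW (ampl_munit _ _ _ _) => t ->.
have aY : ampl G' (munit_coef s a b y).
  by apply: amplZ; apply: ampl_ptrace => //; exact: amplM.
have hX' : G' `&` H `<=` [set` X].
  by move=> t [[Gt ts] Ht]; have := hX t (conj Gt Ht); rewrite /= in_cons => /orP[/eqP|].
have split_coef : sum_of_products (ampl (G' `&` H)) (ampl (G `&` ~` H)) (munit_coef s a b y).
  apply: sopW (IH G' _ fG' aY hX') => // v.
  by apply: amplW => t [[Gt _] nH].
apply: (sop_mull fG (aEG _ _) _ _ _ split_coef).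
- by move=> u; apply: amplW => t [[Gt _] _].
- by move=> v; apply: amplW => t [Gt _].
move=> u au; apply: amplM; first exact: finite_setIl.
  by apply: amplW (ampl_munit _ _ _ _) => t ->.
by apply: amplW au => t [[Gt _] Ht].
Qed.

Lemma sop_split H G y : finite_set G -> ampl G y ->
  sum_of_products (ampl (G `&` H)) (ampl (G `&` ~` H)) y.
Proof.
move=> fG ay; have /finite_seqP [X eX] := finite_setIl H fG.
by apply: (sop_split_seq (X := X)) => //; rewrite eX.
Qed.

End SumsOfProducts.

Section Geometry.
Variable D : nat.
Local Notation site := (site D).

Lemma linf_distC (s t : site) : linf_dist s t = linf_dist t s.
Proof. by apply: eq_bigr => i _; lia. Qed.

Lemma linf_dist_coord (s t : site) i : (`|s i - t i| <= linf_dist s t)%N.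
Proof. exact: (@leq_bigmax _ (fun i => `|s i - t i|%N) i). Qed.

Lemma linf_dist_triangle (s t u : site) :
  (linf_dist s u <= linf_dist s t + linf_dist t u)%N.
Proof.
apply/bigmax_leqP => i _.
by have := linf_dist_coord s t i; have := linf_dist_coord t u i; lia.
Qed.

Lemma thickenS (F G : set site) l : F `<=` G -> thicken F l `<=` thicken G l.
Proof. by move=> FG t [s Fs h]; exists s => //; apply: FG. Qed.

Lemma thicken_thicken (F : set site) l m :
  thicken (thicken F l) m `<=` thicken F (l + m).
Proof.
move=> u [t [s Fs st] tu]; exists s => //.
by apply: leq_trans (linf_dist_triangle s t u) _; apply: leq_add.
Qed.

Lemma finite_thicken (F : set site) l : finite_set F -> finite_set (thicken F l).
Proof.
move=> fF; pose shift (s : site) (f : {ffun 'I_D -> 'I_(l + l).+1}) : site :=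
  [ffun i => s i - l%:Z + (f i)%:Z].
have -> : thicken F l = \bigcup_(s in F) (shift s @` [set: {ffun 'I_D -> 'I_(l + l).+1}]).
  apply/seteqP; split=> [t [s Fs st]|t [s Fs [f _ <-]]].
    have shiftK (a b : int) : (absz (a - b)%R <= l)%N ->
        (absz (b - a + l%:Z)%R < (l + l).+1)%N /\ a - l%:Z + (absz (b - a + l%:Z))%:Z = b.
      by lia.
    exists s => //; exists [ffun i => inord (absz (t i - s i + l%:Z))] => //.
    apply/ffunP => i; have [lt eq] := shiftK _ _ (leq_trans (linf_dist_coord s t i) st).
    by rewrite !ffunE inordK.
  exists s => //; apply/bigmax_leqP => i _; rewrite ffunE.
  by have := ltn_ord (f i); lia.
by apply: bigcup_finite => // s _; apply: finite_image.
Qed.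

End Geometry.

Section HalfSpaces.
Variable d : nat.
Local Notation site := (site d.+1).

Lemma proj_dist (s t : site) : (linf_dist (proj s) (proj t) <= linf_dist s t)%N.
Proof. by apply/bigmax_leqP => i _; rewrite /proj !ffunE; exact: linf_dist_coord. Qed.

Lemma thicken_Hhalf n l (t : site) : thicken (Hhalf n) l t -> t ord0 <= n + l%:Z.
Proof. by move=> [s]; rewrite /Hhalf /= => Hs st; have := linf_dist_coord s t ord0; lia. Qed.

Lemma thicken_Hhalf_compl n l (t : site) : thicken (~` Hhalf n) l t -> n - l%:Z + 1 <= t ord0.
Proof.
by move=> [s]; rewrite /Hhalf /= => /negP Hs st; have := linf_dist_coord s t ord0; lia.
Qed.

Lemma thicken1_Hhalf n l (s : site) : s ord0 <= n - l%:Z -> thicken [set s] l `<=` Hhalf n.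
Proof.
by move=> hs t [_ /= -> st]; have := linf_dist_coord s t ord0; rewrite /Hhalf /=; lia.
Qed.

Lemma thicken1_Hhalf_compl n l (s : site) :
  n + l%:Z < s ord0 -> thicken [set s] l `<=` ~` Hhalf n.
Proof.
move=> hs t [_ /= -> st]; have := linf_dist_coord s t ord0.
by rewrite /Hhalf /= => h /negP; apply; lia.
Qed.

End HalfSpaces.

Section QCA.
Variable D : nat.
Variable p : site D -> nat.
Variable alpha : op D -> op D.
Variable l : nat.
Hypothesis alpha_qca : QCA_spread p alpha l.
Local Notation site := (site D).
Local Notation op := (op D).
Local Notation ampl := (ampliation p).
Local Notation Mat := (Mat p).
Local Notation munit := (munit p).

Lemma Mat_ampl G x : finite_set G -> ampl G x -> Mat G x.
Proof. by move=> fG ax; exists G; split. Qed.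

Lemma Mat_setT G x : finite_set G -> ampl G x -> Mat setT x.
Proof. by move=> fG ax; exists G. Qed.

Lemma MatS S S' x : S `<=` S' -> Mat S x -> Mat S' x.
Proof. by move=> SS [G [fG GS ax]]; exists G; split=> //; apply: subset_trans SS. Qed.

Lemma Mat0 S : Mat S (@opzero D).
Proof. by exists set0; split=> //; exact: ampl0. Qed.

Lemma Mat1 S : Mat S (opone p).
Proof. by exists set0; split=> //; exact: ampl1. Qed.

Lemma MatD S x y : Mat S x -> Mat S y -> Mat S (opadd x y).
Proof.
move=> [G1 [f1 s1 a1]] [G2 [f2 s2 a2]]; exists (G1 `|` G2); split.
- by rewrite finite_setU.
- by move=> t [/s1|/s2].
- by apply: amplD; [apply: amplW a1 => t; left|apply: amplW a2 => t; right].
Qed.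

Lemma MatM S x y : Mat S x -> Mat S y -> Mat S (opmul x y).
Proof.
move=> [G1 [f1 s1 a1]] [G2 [f2 s2 a2]]; exists (G1 `|` G2); split.
- by rewrite finite_setU.
- by move=> t [/s1|/s2].
- apply: amplM; first by rewrite finite_setU.
  + by apply: amplW a1 => t; left.
  + by apply: amplW a2 => t; right.
Qed.

Lemma MatZ S c x : Mat S x -> Mat S (opscale c x).
Proof. by move=> [G [f s a]]; exists G; split=> //; apply: amplZ. Qed.

Lemma Mat_adj S x : Mat S x -> Mat S (opadj x).
Proof. by move=> [G [f s a]]; exists G; split=> //; apply: ampl_adj. Qed.

Lemma Mat_sum S (I : Type) (r : seq I) (f : I -> op) :
  (forall i, Mat S (f i)) -> Mat S (\big[@opadd D/@opzero D]_(i <- r) f i).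
Proof.
move=> h; elim: r => [|a r IH]; first by rewrite big_nil; exact: Mat0.
by rewrite big_cons; apply: MatD.
Qed.

Lemma exists_Supp G x : finite_set G -> ampl G x -> exists F, is_Supp p x F.
Proof.
move=> /finite_seqP [X ->]; move: {2}(size X) (leqnn (size X)) => n.
elim: n X => [|n IH] X hn ax.
  exists [set` X]; split; [exact: finite_seq|exact: Mat_ampl (finite_seq X) ax|].
  by move=> G0 _ _ t; case: X hn ax.
have [min|] := pselect (forall G0, finite_set G0 -> Mat G0 x -> [set` X] `<=` G0).
  by exists [set` X]; split; [exact: finite_seq|exact: Mat_ampl (finite_seq X) ax|].
(* otherwise x lives on a set missing some t in X: intersect and recurse *)
move=> /existsNP [G0 /not_implyP [fG0 /not_implyP [[G1 [fG1 G1G aG1]] nsub]]].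
have [t tX ntG] : exists2 t, t \in X & ~ G0 t.
  by apply: contra_notP nsub => h u /= uX; apply: contra_notP h => nG; exists u.
pose X' := [seq u <- X | `[< G1 u >]].
apply: (IH X'); last first.
  apply: amplW (amplI ax aG1) => u [uX G1u].
  by rewrite /= mem_filter uX andbT; apply/asboolP.
rewrite -ltnS; apply: leq_trans hn.
rewrite size_filter -[X in (_ < X)%N](count_predC (fun u => `[< G1 u >]) X).
rewrite -addn1 leq_add2l -has_count; apply/hasP; exists t => //=.
by apply/negP => /asboolP /G1G.
Qed.

Lemma Supp_min x F G : is_Supp p x F -> finite_set G -> ampl G x -> F `<=` G.
Proof. by move=> [_ _ h] fG aG; apply: h => //; exists G; split. Qed.

Lemma ampl_Supp x F : is_Supp p x F -> ampl F x.
Proof. by move=> [_ [G [_ GF aG]] _]; apply: amplW aG. Qed.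

Lemma alpha_Mat x : Mat setT x -> Mat setT (alpha x).
Proof. by have [[[h _ _ _ _] _] _] := alpha_qca; apply: h. Qed.

Lemma alphaD x y : Mat setT x -> Mat setT y -> alpha (opadd x y) = opadd (alpha x) (alpha y).
Proof. by have [[[_ h _ _ _] _] _] := alpha_qca; apply: h. Qed.

Lemma alphaZ c x : Mat setT x -> alpha (opscale c x) = opscale c (alpha x).
Proof. by have [[[_ _ h _ _] _] _] := alpha_qca; apply: h. Qed.

Lemma alphaM x y : Mat setT x -> Mat setT y -> alpha (opmul x y) = opmul (alpha x) (alpha y).
Proof. by have [[[_ _ _ h _] _] _] := alpha_qca; apply: h. Qed.

Lemma alpha_adj x : Mat setT x -> alpha (opadj x) = opadj (alpha x).
Proof. by have [[[_ _ _ _ h] _] _] := alpha_qca; apply: h. Qed.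

Lemma alpha_inj x y : Mat setT x -> Mat setT y -> alpha x = alpha y -> x = y.
Proof. by have [[_ [h _]] _] := alpha_qca; apply: h. Qed.

Lemma alpha_surj y : Mat setT y -> exists2 x, Mat setT x & alpha x = y.
Proof. by have [[_ [_ h]] _] := alpha_qca; apply: h. Qed.

Lemma alpha0 : alpha (@opzero D) = @opzero D.
Proof.
have scale0 y : opscale 0 y = @opzero D.
  by apply/funext => a; apply/funext => b; rewrite /opscale mul0r.
by rewrite -{1}(scale0 (@opzero D)) alphaZ ?scale0 //; exact: Mat0.
Qed.

Lemma alpha_sum (I : Type) (r : seq I) (f : I -> op) :
  (forall i, Mat setT (f i)) ->
  alpha (\big[@opadd D/@opzero D]_(i <- r) f i) =
  \big[@opadd D/@opzero D]_(i <- r) alpha (f i).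
Proof.
move=> h; elim: r => [|a r IH]; first by rewrite !big_nil alpha0.
by rewrite !big_cons alphaD ?IH //; apply: Mat_sum.
Qed.

Lemma alpha1 : alpha (opone p) = opone p.
Proof.
have [w Mw ew] := alpha_surj (Mat1 setT).
have [G' [_ _ aG']] := alpha_Mat (Mat1 setT).
have [Gw [_ _ aGw]] := Mw.
by rewrite -(opmul1 aG') -{2}ew -alphaM ?(op1mul aGw) //; exact: Mat1.
Qed.

Lemma ampl_alpha G x : finite_set G -> ampl G x -> ampl (thicken G l) (alpha x).
Proof.
move=> fG ax; have [[_ _] spread] := alpha_qca.
have [F SuppF] := exists_Supp fG ax.
have [G0 [fG0 _ aG0]] := alpha_Mat (Mat_setT fG ax).
have [F' SuppF'] := exists_Supp fG0 aG0.
apply: amplW (ampl_Supp SuppF').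
exact: subset_trans (spread _ _ _ SuppF SuppF') (thickenS (Supp_min SuppF fG ax)).
Qed.

Lemma ampl_alpha_inv G y w : finite_set G -> ampl G y -> Mat setT w -> alpha w = y ->
  ampl (thicken G l) w.
Proof.
move=> fG ay Mw ew.
(* for s far from G, alpha (munit s a b) lives away from G, so it commutes with
   y = alpha w; by injectivity of alpha, w commutes with munit s a b *)
have trivial_at s G' : ~ thicken G l s -> ampl G' w -> ampl (G' `&` [set t | t <> s]) w.
  move=> ns aw; apply: (ampl_commute_munits aw) => a b _ _.
  have Me : Mat setT (munit s a b) := Mat_setT (finite_set1 s) (ampl_munit p s a b).
  apply: alpha_inj; try exact: MatM.
  rewrite !alphaM // ew.
  apply: (opmul_disjointC (ampl_alpha (finite_set1 s) (ampl_munit _ _ _ _)) ay).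
  by move=> t [_ /= -> st] Gt; apply: ns; exists t => //; rewrite linf_distC.
have [G0 [fG0 _ aw]] := Mw; have /finite_seqP [X eX] := fG0; rewrite eX in aw.
have ampl_upto (X' : seq site) : ampl ([set` X] `&` [set t | t \in X' -> thicken G l t]) w.
  elim: X' => [|s X' IH]; first by apply: amplW aw => t Xt; split.
  have [Ts|nTs] := pselect (thicken G l s).
    by apply: amplW IH => t [Xt h]; split=> //; rewrite /= in_cons => /orP[/eqP ->|/h].
  apply: amplW (trivial_at s _ nTs IH) => t [[Xt h] ts]; split=> //.
  by rewrite /= in_cons => /orP[/eqP|/h].
by apply: amplW (ampl_upto X) => t [Xt]; apply.
Qed.

Lemma MatT S x : Mat S x -> Mat setT x.
Proof. exact: MatS. Qed.

Lemma image_alpha1 S : (alpha @` Mat S) (opone p).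
Proof. by exists (opone p); [exact: Mat1|exact: alpha1]. Qed.

Lemma image_alphaD S x y :
  (alpha @` Mat S) x -> (alpha @` Mat S) y -> (alpha @` Mat S) (opadd x y).
Proof.
move=> [x' Mx' <-] [y' My' <-]; exists (opadd x' y'); first exact: MatD.
by rewrite alphaD //; [exact: MatT Mx'|exact: MatT My'].
Qed.

Lemma image_alphaZ S c x : (alpha @` Mat S) x -> (alpha @` Mat S) (opscale c x).
Proof.
move=> [x' Mx' <-]; exists (opscale c x'); first exact: MatZ.
by rewrite alphaZ //; exact: MatT Mx'.
Qed.

Lemma image_alphaM S x y :
  (alpha @` Mat S) x -> (alpha @` Mat S) y -> (alpha @` Mat S) (opmul x y).
Proof.
move=> [x' Mx' <-] [y' My' <-]; exists (opmul x' y'); first exact: MatM.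
by rewrite alphaM //; [exact: MatT Mx'|exact: MatT My'].
Qed.

Lemma image_alpha_adj S x : (alpha @` Mat S) x -> (alpha @` Mat S) (opadj x).
Proof.
move=> [x' Mx' <-]; exists (opadj x'); first exact: Mat_adj.
by rewrite alpha_adj //; exact: MatT Mx'.
Qed.

Lemma image_alpha_sum S (I : Type) (r : seq I) (f : I -> op) :
  (forall i, (alpha @` Mat S) (f i)) ->
  (alpha @` Mat S) (\big[@opadd D/@opzero D]_(i <- r) f i).
Proof.
move=> h; elim: r => [|a r IH]; last by rewrite big_cons; apply: image_alphaD.
by rewrite big_nil; exists (@opzero D); [exact: Mat0|exact: alpha0].
Qed.

Lemma munit_image S s a b : thicken [set s] l `<=` S -> (alpha @` Mat S) (munit s a b).
Proof.
move=> sS; have fs := finite_set1 s; have aE := ampl_munit p s a b.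
have [w Mw ew] := alpha_surj (Mat_setT fs aE).
exists w => //; exists (thicken [set s] l); split=> //; first exact: finite_thicken.
exact: ampl_alpha_inv ew.
Qed.

Lemma ptrace_image S s z : thicken [set s] l `<=` S ->
  (alpha @` Mat S) z -> (alpha @` Mat S) (ptrace p s z).
Proof.
move=> sS hz; apply: image_alpha_sum => a; apply: image_alpha_sum => b.
apply: image_alphaZ; apply: image_alphaM (munit_image _ _ sS) _.
exact: image_alphaM hz (munit_image _ _ sS).
Qed.

Lemma ptraces_image S L z : (forall s, s \in L -> thicken [set s] l `<=` S) ->
  (alpha @` Mat S) z -> (alpha @` Mat S) (ptraces p L z).
Proof.
move=> hL hz; elim: L hL => [//|s L IH] hL /=.
apply: ptrace_image; first by apply: hL; rewrite in_cons eqxx.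
by apply: IH => t tL; apply: hL; rewrite in_cons tL orbT.
Qed.

End QCA.

Section Boundary.
Variable d : nat.
Variable p : site d.+1 -> nat.
Hypothesis p_gt0 : forall s, (0 < p s)%N.
Variable alpha : op d.+1 -> op d.+1.
Variables (l : nat) (n : int).
Hypothesis alpha_qca : QCA_spread p alpha l.
Local Notation site := (site d.+1).
Local Notation op := (op d.+1).
Local Notation ampl := (ampliation p).
Local Notation Mat := (Mat p).
Local Notation B := (boundary_alg p alpha n l).

Lemma coarseMat_setT : coarseMat p n l setT = Mat (Sstrip n l).
Proof. by rewrite /coarseMat; congr Mat; apply/seteqP; split=> s /=; [case|split]. Qed.

Lemma boundary_algE : B = (alpha @` Mat (Hhalf n)) `&` Mat (Sstrip n l).
Proof. by apply/seteqP; split=> x [[y My e] Sx]; split=> //; exists y => //; exact/esym. Qed.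

Lemma boundary_subalg : unital_star_subalg p (coarseMat p n l setT) B.
Proof.
rewrite coarseMat_setT boundary_algE; split; first split.
- by move=> x [].
- by split; [exact: (image_alpha1 alpha_qca)|exact: Mat1].
- by move=> x y [Ix Sx] [Iy Sy]; split; [exact: (image_alphaD alpha_qca)|exact: MatD].
- by move=> c x [Ix Sx]; split; [exact: (image_alphaZ alpha_qca)|exact: MatZ].
- by move=> x y [Ix Sx] [Iy Sy]; split; [exact: (image_alphaM alpha_qca)|exact: MatM].
- by move=> x [Ix Sx]; split; [exact: (image_alpha_adj alpha_qca)|exact: Mat_adj].
Qed.

Lemma Mat_strip_ptraces_alpha G u L : finite_set G -> ampl G u ->
  thicken G l `&` [set t | t \notin L] `<=` Sstrip n l ->
  Mat (Sstrip n l) (ptraces p L (alpha u)).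
Proof.
move=> fG au GS; exists (thicken G l `&` [set t | t \notin L]); split=> //.
  exact/finite_setIl/finite_thicken.
by apply: ampl_ptraces; [exact: finite_thicken|exact: (ampl_alpha alpha_qca)].
Qed.

Definition left_sites (X : seq site) := [seq t : site <- X | t ord0 <= n - l%:Z].
Definition right_sites (X : seq site) := [seq t : site <- X | n + l%:Z < t ord0].

Lemma mem_left_sites X (t : site) : (t \in left_sites X) = (t \in X) && (t ord0 <= n - l%:Z).
Proof. by rewrite mem_filter andbC. Qed.

Lemma mem_right_sites X (t : site) : (t \in right_sites X) = (t \in X) && (n + l%:Z < t ord0).
Proof. by rewrite mem_filter andbC. Qed.

Lemma ptraces_strip_id F X x : ampl F x -> F `<=` Sstrip n l ->
  ptraces p (left_sites X) (ptraces p (right_sites X) x) = x.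
Proof.
move=> aF FS; rewrite (ptraces_id p_gt0 aF) ?(ptraces_id p_gt0 aF) // => t;
  by rewrite ?mem_left_sites ?mem_right_sites => /andP[_ ht] /FS /andP[h1 h2]; lia.
Qed.

Lemma ptraces_alpha_sum_of_products G X k (u v : 'I_k -> op) : finite_set G ->
  (forall i, ampl (G `&` Hhalf n) (u i) /\ ampl (G `&` ~` Hhalf n) (v i)) ->
  ptraces p (left_sites X) (ptraces p (right_sites X)
    (alpha (\big[@opadd _/@opzero _]_(i < k) opmul (u i) (v i)))) =
  \big[@opadd _/@opzero _]_(i < k)
    opmul (ptraces p (left_sites X) (alpha (u i))) (ptraces p (right_sites X) (alpha (v i))).
Proof.
move=> fG huv; have fGH H := finite_setIl H fG.
have Muv i : Mat setT (u i) /\ Mat setT (v i).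
  by have [au av] := huv i; split; apply: Mat_setT au || apply: Mat_setT av.
rewrite (alpha_sum alpha_qca) => [|i]; last by have [] := Muv i; apply: MatM.
rewrite (eq_bigr (fun i => opmul (alpha (u i)) (alpha (v i)))) => [|i _]; last first.
  by have [] := Muv i; apply: (alphaM alpha_qca).
apply: (ptraces_sum_of_products (TA := thicken (G `&` Hhalf n) l)
                                (TB := thicken (G `&` ~` Hhalf n) l)).
- exact/finite_thicken/fGH.
- exact/finite_thicken/fGH.
- by move=> i; apply: (ampl_alpha alpha_qca (fGH _)); case: (huv i).
- by move=> i; apply: (ampl_alpha alpha_qca (fGH _)); case: (huv i).
- move=> t; rewrite mem_left_sites => /andP[_ ht].
  by move/(thickenS (@subIsetr _ G _))/thicken_Hhalf_compl; lia.
- move=> t; rewrite mem_right_sites => /andP[_ ht].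
  by move/(thickenS (@subIsetr _ G _))/thicken_Hhalf; lia.
Qed.

Lemma ptraces_alpha_boundary G u X : finite_set G -> ampl (G `&` Hhalf n) u ->
  thicken (G `&` Hhalf n) l `<=` [set` X] -> B (ptraces p (left_sites X) (alpha u)).
Proof.
move=> fG au TX; have fGH := finite_setIl (Hhalf n) fG.
rewrite boundary_algE; split.
  apply: (ptraces_image alpha_qca) => [s|].
    by rewrite mem_left_sites => /andP[_ hs]; exact: thicken1_Hhalf.
  by exists u => //; exists (G `&` Hhalf n); split=> // t [].
apply: Mat_strip_ptraces_alpha fGH au _ => t [Tt] /=.
rewrite mem_left_sites (TX t Tt) => /negP.
have := thicken_Hhalf (thickenS (@subIsetr _ G _) Tt).
by rewrite /Sstrip /=; lia.
Qed.

Lemma ptraces_alpha_commutant G v X : finite_set G -> ampl (G `&` ~` Hhalf n) v ->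
  thicken (G `&` ~` Hhalf n) l `<=` [set` X] ->
  commutant_in (coarseMat p n l setT) B (ptraces p (right_sites X) (alpha v)).
Proof.
move=> fG av TX; have fGH := finite_setIl (~` Hhalf n) fG.
rewrite coarseMat_setT boundary_algE; split.
  apply: Mat_strip_ptraces_alpha fGH av _ => t [Tt] /=.
  rewrite mem_right_sites (TX t Tt) => /negP.
  have := thicken_Hhalf_compl (thickenS (@subIsetr _ G _) Tt).
  by rewrite /Sstrip /=; lia.
move=> a [[y [Gy [fGy GyH ay]] <-] _].
have [v' [Gv [fGv GvH av']] ev'] :
    (alpha @` Mat (~` Hhalf n)) (ptraces p (right_sites X) (alpha v)).
  apply: (ptraces_image alpha_qca) => [s|].
    by rewrite mem_right_sites => /andP[_ hs]; exact: thicken1_Hhalf_compl.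
  by exists v => //; exists (G `&` ~` Hhalf n); split=> // t [].
have My := Mat_setT fGy ay; have Mv' := Mat_setT fGv av'.
rewrite -ev' -!(alphaM alpha_qca) //.
by congr alpha; apply: (opmul_disjointC ay av') => t /GyH ? /GvH.
Qed.

Lemma Supp_proj_coarseSupp x F Y : is_Supp p x F -> is_coarseSupp p n l x Y ->
  forall t, F t -> Y (proj t).
Proof.
move=> SuppF [_ [G [fG GY aG]] _] t Ft.
by have [_] := GY t (Supp_min SuppF fG aG Ft).
Qed.

Lemma coarseSupp_thicken z T F Y Yz m : is_coarseSupp p n l z Yz -> ampl T z ->
  T `<=` thicken F m -> (forall t, F t -> Y (proj t)) -> Yz `<=` thicken Y m.
Proof.
move=> [_ [Gz [fGz GzS aGz]] minYz] aT TF FY.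
have : Yz `<=` @proj d @` (Gz `&` T).
  apply: minYz; first exact/finite_image/finite_setIl.
  exists (Gz `&` T); split; [exact: finite_setIl| |exact: amplI].
  by move=> t [Gt Tt]; have [St _] := GzS t Gt; split=> //; exists t.
move=> YzGT y /YzGT [t [_ /TF [s Fs st]] <-]; exists (proj s); first exact: FY.
exact: leq_trans (proj_dist s t) st.
Qed.

Lemma boundary_decomposition x : coarseMat p n l setT x ->
  exists (k : nat) (a b : 'I_k -> op),
    x = \big[@opadd _/@opzero _]_(i < k) opmul (a i) (b i) /\
    forall i, [/\ B (a i), commutant_in (coarseMat p n l setT) B (b i) &
      forall Yx Ya Yb, is_coarseSupp p n l x Yx ->
        is_coarseSupp p n l (a i) Ya -> is_coarseSupp p n l (b i) Yb ->
        Ya `<=` thicken Yx (2 * l)%N /\ Yb `<=` thicken Yx (2 * l)%N].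
Proof.
move=> Sx; have [G0 [fG0 G0S aG0]] : Mat (Sstrip n l) x by rewrite -coarseMat_setT.
have [F SuppF] := exists_Supp fG0 aG0; have aF := ampl_Supp SuppF.
have fF : finite_set F by case: SuppF.
have FS : F `<=` Sstrip n l := subset_trans (Supp_min SuppF fG0 aG0) G0S.
have [w Mw ew] := alpha_surj alpha_qca (Mat_setT fF aF).
pose G := thicken F l; have fG : finite_set G := finite_thicken l fF.
have aw : ampl G w := ampl_alpha_inv alpha_qca fF aF Mw ew.
have [k [u [v [ewuv huv]]]] := sum_of_productsP (sop_split p_gt0 (Hhalf n) fG aw).
have /finite_seqP [X eX] := finite_thicken l fG.
have GX H : thicken (G `&` H) l `<=` [set` X].
  by rewrite -eX; apply: thickenS; apply: subIsetl.
exists k, (fun i => ptraces p (left_sites X) (alpha (u i))),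
  (fun i => ptraces p (right_sites X) (alpha (v i))); split.
  by rewrite -(ptraces_strip_id X aF FS) -ew ewuv; exact: ptraces_alpha_sum_of_products fG huv.
move=> i; have [au av] := huv i; split.
- exact: ptraces_alpha_boundary fG au (GX _).
- exact: ptraces_alpha_commutant fG av (GX _).
move=> Yx Ya Yb cx ca cb; have FY := Supp_proj_coarseSupp SuppF cx.
have near H (L : seq site) :
    thicken (G `&` H) l `&` [set t | t \notin L] `<=` thicken F (2 * l)%N.
  move=> t [/GX]; rewrite -eX mul2n -addnn => Tt _; exact: thicken_thicken.
have fGH H := finite_setIl H fG.
split.
  apply: (coarseSupp_thicken ca _ (near _ _) FY).
  exact: ampl_ptraces (finite_thicken l (fGH _)) (ampl_alpha alpha_qca (fGH _) au).
apply: (coarseSupp_thicken cb _ (near _ _) FY).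
exact: ampl_ptraces (finite_thicken l (fGH _)) (ampl_alpha alpha_qca (fGH _) av).
Qed.

End Boundary.

Theorem lemma3p6 (d : nat) (p : site d.+1 -> nat)
  (alpha : op d.+1 -> op d.+1) (l : nat) (n : int) :
  (forall s, (0 < p s)%N) ->
  QCA_spread p alpha l -> (1 < l)%N ->
  invertible_subalg p n l (boundary_alg p alpha n l) (2 * l)%N.
Proof.
(* the argument works for every spread bound l *)
move=> p_gt0 alpha_qca _; split; first exact: boundary_subalg.
exact: boundary_decomposition.
Qed.
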